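(* Let $\mathcal H$ be a complex Hilbert space and $T\in\mathcal B(\mathcal H)$ left-invertible, with Cauchy dual $T'=T(T^*T)^{-1}$. The following are equivalent: (i) $\|T'T^*x\|\le\|T'Tx\|$ for all $x\in\mathcal H$; (ii) $T(T^*T)^{-1}T^*\le T^*(T^*T)^{-1}T$; (iii) $P_{\mathcal R(T)}\le T^*(T^*T)^{-1}T$; (iv) the restriction of $T'$ to its range $\mathcal R(T')$ is hyponormal. In particular, every concave operator is weakly concave.
   Context: $P_{\mathcal M}$ is the orthogonal projection onto a closed subspace $\mathcal M$; $\mathcal R(\cdot)$ is the range. An operator $A$ is hyponormal if $A^*A-AA^*\ge0$. $T$ is concave if $I-2T^*T+T^{*2}T^2\le0$. A left-invertible $T$ is weakly concave if $\sigma_{ap}(T)\subseteq\partial\mathbb D$ (approximate point spectrum in the unit circle), $\|x\|\le\|Tx\|$ for all $x$, and $\|T'T^*x\|\le\|T'Tx\|$ for all $x$. *)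

From HB Require Import structures.
From mathcomp Require Import all_boot all_order all_algebra.
From mathcomp Require Import reals.
From mathcomp Require Import complex.
From Stdlib Require Import ClassicalEpsilon.

Set Implicit Arguments. Unset Strict Implicit. Unset Printing Implicit Defensive.
Import Order.TTheory GRing.Theory Num.Theory.
Local Open Scope ring_scope.

Section Hilbert.
Variables (R : realType) (V : lmodType R[i]) (ip : V -> V -> R[i]).

Definition inner_product : Prop :=
  [/\ (forall (a : R[i]) (x y z : V), ip (a *: x + y) z = a * ip x z + ip y z),
      (forall x y : V, ip y x = (ip x y)^*),
      (forall x : V, 0 <= ip x x) &
      (forall x : V, ip x x = 0 -> x = 0)].

Definition hnorm (x : V) : R[i] := sqrtC (ip x x).

Definition complete : Prop :=
  forall u : nat -> V,
    (forall e : R[i], 0 < e -> exists N : nat, forall m n : nat,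
        (N <= m)%N -> (N <= n)%N -> hnorm (u m - u n) < e) ->
    exists l : V, forall e : R[i], 0 < e -> exists N : nat, forall n : nat,
        (N <= n)%N -> hnorm (u n - l) < e.

Definition hilbert : Prop := inner_product /\ complete.

Definition is_lin (A : V -> V) : Prop :=
  forall (a : R[i]) (x y : V), A (a *: x + y) = a *: A x + A y.

Definition bounded_op (A : V -> V) : Prop :=
  is_lin A /\ exists M : R[i], forall x : V, hnorm (A x) <= M * hnorm x.

(* Hilbert-space adjoint A^* (unique whenever it exists) *)
Definition adj (A : V -> V) : V -> V :=
  epsilon (inhabits id) (fun B : V -> V => forall x y : V, ip (A x) y = ip x (B y)).

Definition opinv (A : V -> V) : V -> V :=
  epsilon (inhabits id) (fun B : V -> V =>
    bounded_op B /\ (forall x, B (A x) = x) /\ (forall x, A (B x) = x)).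

Definition left_invertible (T : V -> V) : Prop :=
  exists L : V -> V, bounded_op L /\ forall x, L (T x) = x.

Definition cdual (T : V -> V) : V -> V := T \o opinv (adj T \o T).

Definition op_le (A B : V -> V) : Prop := forall x : V, ip (A x) x <= ip (B x) x.

Definition oprange (A : V -> V) : V -> Prop := fun y => exists x, y = A x.

Definition is_orth_proj (M : V -> Prop) (P : V -> V) : Prop :=
  [/\ is_lin P, (forall x, M (P x)), (forall x, M x -> P x = x) &
      (forall x y, M y -> ip (x - P x) y = 0)].

Definition orth_proj (M : V -> Prop) : V -> V :=
  epsilon (inhabits id) (is_orth_proj M).

(* the adjoint (in B(M)) of the restriction A|_M of an operator A with A M ⊆ M *)
Definition adj_on (M : V -> Prop) (A : V -> V) : V -> V :=
  epsilon (inhabits id) (fun B : V -> V =>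
    (forall x, M x -> M (B x)) /\
    (forall x y, M x -> M y -> ip (A x) y = ip x (B y))).

Definition hyponormal_on (M : V -> Prop) (A : V -> V) : Prop :=
  (forall x, M x -> M (A x)) /\
  forall x, M x ->
    0 <= ip (adj_on M A (A x) - A (adj_on M A x)) x.

Definition concave (T : V -> V) : Prop :=
  op_le (fun x => x - 2%:R *: adj T (T x) + adj T (adj T (T (T x)))) (fun _ => 0).

Definition ap_spec (T : V -> V) (l : R[i]) : Prop :=
  forall e : R[i], 0 < e -> exists x : V, hnorm x = 1 /\ hnorm (T x - l *: x) < e.

Definition weakly_concave (T : V -> V) : Prop :=
  [/\ left_invertible T,
      (forall l : R[i], ap_spec T l -> `|l| = 1),
      (forall x : V, hnorm x <= hnorm (T x)) &
      (forall x : V, hnorm (cdual T (adj T x)) <= hnorm (cdual T (T x)))].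

End Hilbert.

From HB Require Import structures.
From mathcomp Require Import all_boot all_order all_algebra.
From mathcomp Require Import reals complex ring lra.
From Stdlib Require Import ClassicalEpsilon.
Import Order.TTheory GRing.Theory Num.Theory.
Set Implicit Arguments. Unset Strict Implicit. Unset Printing Implicit Defensive.
Local Open Scope ring_scope.

(* With Q := (T^* T)^-1 we have T' = T Q, and P := T Q T^* is the orthogonal
   projection onto R(T) = R(T').  All four conditions say that
   ||T Q T^* y|| <= ||T Q T y|| for every y:
   (ii) because <T Q T^* y, y> = ||T Q T^* y||^2 and <T^* Q T y, y> = ||T Q T y||^2;
   (iii) because P = T Q T^*;
   (iv) because the adjoint of T' restricted to R(T) is P Q T^*, which maps T y to
   T Q T^* y, and an operator A with adjoint B on an invariant subspace is
   hyponormal there iff ||B x|| <= ||A x||.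
   If T is concave, k |-> ||T^k x||^2 is concave, so ||x|| <= ||T x|| and ||T^k x||^2
   grows at most linearly; the latter rules out approximate eigenvalues of modulus
   > 1.  Finally 2 <u, w> - ||T u||^2 <= ||T Q w||^2 with u = w = T y gives
   ||T Q T^* y||^2 <= ||y||^2 <= 2 ||T y||^2 - ||T^2 y||^2 <= ||T Q T y||^2.
   Adjoints and (T^* T)^-1 are obtained from the Riesz representation theorem,
   itself a consequence of the projection theorem. *)

Local Notation "x %:C" := (real_complex _ x) (format "x %:C").
(* Real and imaginary parts with values in [R] (the generic ['Re] is [R[i]]-valued). *)
Local Notation Re := complex.Re.
Local Notation Im := complex.Im.

Section ComplexScalars.
Variable R : realType.
Implicit Types (a b z : R[i]) (r : R).

Lemma ReM a b : Re (a * b) = Re a * Re b - Im a * Im b.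
Proof. by case: a => ? ?; case: b => ? ?. Qed.
Lemma ImM a b : Im (a * b) = Re a * Im b + Im a * Re b.
Proof. by case: a => ? ?; case: b => ? ?. Qed.
Lemma ReD a b : Re (a + b) = Re a + Re b. Proof. by case: a => ? ?; case: b => ? ?. Qed.
Lemma ReN a : Re (- a) = - Re a. Proof. by case: a => ? ?. Qed.
Lemma ReJ a : Re a^* = Re a. Proof. by case: a => ? ?. Qed.
Lemma ImJ a : Im a^* = - Im a. Proof. by case: a => ? ?. Qed.
Lemma ReCM r a : Re (r%:C * a) = r * Re a. Proof. by rewrite ReM /= mul0r subr0. Qed.

Lemma complex_ext a b : Re a = Re b -> Im a = Im b -> a = b.
Proof. by case: a; case: b => ? ? ? ? /= -> ->. Qed.

Lemma conjC_real r : r%:C^* = r%:C.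
Proof. by apply: complex_ext; rewrite ?ReJ ?ImJ /= ?oppr0. Qed.

Definition normc2 z : R := Re z ^+ 2 + Im z ^+ 2.

Lemma normc2_ge0 z : 0 <= normc2 z. Proof. rewrite /normc2; nra. Qed.

Lemma normc2_eq0 z : normc2 z = 0 -> z = 0.
Proof.
rewrite /normc2 => z0; have Re0 : Re z ^+ 2 = 0 by nra.
have Im0 : Im z ^+ 2 = 0 by nra.
by apply: complex_ext; apply/eqP; rewrite -sqrf_eq0 ?Re0 ?Im0.
Qed.

Lemma mulJc z : z^* * z = (normc2 z)%:C.
Proof. apply: complex_ext; rewrite ?ReM ?ImM ?ReJ ?ImJ /= /normc2; ring. Qed.

Lemma normc2M a b : normc2 (a * b) = normc2 a * normc2 b.
Proof. rewrite /normc2 ReM ImM; ring. Qed.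

Lemma normc2X a k : normc2 (a ^+ k) = normc2 a ^+ k.
Proof.
elim: k => [|k IHk]; first by rewrite !expr0 /normc2 /= expr0n addr0 expr1n.
by rewrite !exprS normc2M IHk.
Qed.

Lemma normc2_real r : normc2 r%:C = r ^+ 2. Proof. by rewrite /normc2 /= expr0n addr0. Qed.

Lemma normc2_norm a : `|a| ^+ 2 = (normc2 a)%:C.
Proof. by rewrite sqr_normc mulrC mulJc. Qed.

Lemma ge0_complex z : 0 <= z -> z = (Re z)%:C.
Proof. by rewrite lecE => /andP[/eqP Im0 _]; apply: complex_ext; rewrite //= Im0. Qed.

Lemma gt0_complex z : 0 < z -> z = (Re z)%:C /\ 0 < Re z.
Proof. by rewrite ltcE => /andP[/eqP Im0 ->]; split => //; apply: complex_ext; rewrite //= Im0. Qed.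

Lemma sqrtC_real r : 0 <= r -> sqrtC r%:C = (Num.sqrt r)%:C.
Proof.
move=> r0; rewrite -{1}(sqr_sqrtr r0) rmorphXn sqrCK //.
by rewrite -(rmorph0 (real_complex R)) lecR sqrtr_ge0.
Qed.

Lemma sqrtr_lt (a e : R) : 0 < e -> (Num.sqrt a < e) = (a < e ^+ 2).
Proof. by move=> e0; rewrite -[in RHS]ltr_sqrt ?exprn_gt0 // sqrtr_sqr gtr0_norm. Qed.

Lemma ler_of_small_eps (a b c : R) : 0 <= c ->
  (forall e, 0 < e -> e <= 1 -> a <= b + e * c) -> a <= b.
Proof.
move=> c0 small; case: (lerP a b) => // ba; exfalso.
pose e := (a - b) / (a - b + c + 1).
have eE : e * (a - b + c + 1) = a - b by rewrite /e divfK // gt_eqF //; lra.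
have e0 : 0 < e by rewrite /e divr_gt0 ?subr_gt0 //; lra.
have e1 : e <= 1 by nra.
have := small e e0 e1; nra.
Qed.

Lemma exists_inv_lt (e : R) : 0 < e -> exists N, forall n, (N <= n)%N -> n.+1%:R^-1 < e.
Proof.
move=> e0; exists (Num.Def.archi_bound e^-1) => n Nn.
have lt_bound : e^-1 < (Num.Def.archi_bound e^-1)%:R by rewrite archi_boundP // invr_ge0 ltW.
rewrite -(invrK e) ltf_pV2 ?posrE ?invr_gt0 ?ltr0Sn //.
by apply: (lt_le_trans lt_bound); rewrite ler_nat; exact: leqW.
Qed.

Lemma bernoulli_ineq (h : R) k : 0 <= h -> 1 + k%:R * h <= (1 + h) ^+ k.
Proof.
move=> h0; elim: k => [|k IHk]; first by rewrite mul0r addr0 expr0.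
have : 0 <= k%:R * h by rewrite mulr_ge0 // ler0n.
rewrite exprS -natr1; nra.
Qed.

(* Bernoulli for the exponent [2m]: [L ^+ 2m >= (1 + m h)^2 >= m^2 h^2], with [L = 1 + h]. *)
Lemma exists_pow_gt_affine (L A B : R) : 1 < L -> 0 <= A -> 0 <= B ->
  exists k, A + k%:R * B < L ^+ k.
Proof.
move=> L1 A0 B0; pose h := L - 1; have h0 : 0 < h by rewrite /h subr_gt0.
have := archi_boundP (divr_ge0 (addr_ge0 A0 (mulr_ge0 (ler0n _ 2) B0)) (ltW (exprn_gt0 2 h0))).
set m0 := Num.Def.archi_bound _ => m0_gt; pose m := m0.+1.
have m_gt : A + 2 * B < m%:R * h ^+ 2.
  rewrite ltr_pdivrMr ?exprn_gt0 // in m0_gt; apply: (lt_le_trans m0_gt).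
  by apply: ler_wpM2r; [exact: exprn_ge0 (ltW h0) | rewrite ler_nat].
have m1 : 1 <= m%:R :> R by rewrite ler1n.
exists (m + m)%N; rewrite exprD natrD.
have hL : 1 + h = L by rewrite /h addrC subrK.
have := bernoulli_ineq m (ltW h0); rewrite hL => bern.
have : 0 <= m%:R * h by rewrite mulr_ge0 ?ler0n ?ltW.
nra.
Qed.

End ComplexScalars.

Section InnerProduct.
Variables (R : realType) (V : lmodType R[i]) (ip : V -> V -> R[i]).
Hypothesis ip_inner : inner_product ip.
Implicit Types (x y z : V) (a : R[i]).

Lemma ipDl x y z : ip (x + y) z = ip x z + ip y z.
Proof. by case: ip_inner => lin _ _ _; have := lin 1 x y z; rewrite scale1r mul1r. Qed.

Lemma ip0l z : ip 0 z = 0.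
Proof. by apply: (addrI (ip 0 z)); rewrite addr0 -ipDl addr0. Qed.

Lemma ipZl a x z : ip (a *: x) z = a * ip x z.
Proof. by case: ip_inner => lin _ _ _; have := lin a x 0 z; rewrite addr0 ip0l addr0. Qed.

Lemma ipNl x z : ip (- x) z = - ip x z.
Proof. by rewrite -scaleN1r ipZl mulN1r. Qed.

Lemma ipBl x y z : ip (x - y) z = ip x z - ip y z.
Proof. by rewrite ipDl ipNl. Qed.

Lemma ipC x y : ip y x = (ip x y)^*.
Proof. by case: ip_inner. Qed.

Lemma ipDr x y z : ip x (y + z) = ip x y + ip x z.
Proof. by rewrite ipC ipDl rmorphD /= -!ipC. Qed.

Lemma ipZr a x y : ip x (a *: y) = a^* * ip x y.
Proof. by rewrite ipC ipZl rmorphM /= -ipC. Qed.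

Lemma ip0r x : ip x 0 = 0.
Proof. by rewrite ipC ip0l rmorph0. Qed.

Lemma ipNr x y : ip x (- y) = - ip x y.
Proof. by rewrite ipC ipNl rmorphN /= -ipC. Qed.

Lemma ipBr x y z : ip x (y - z) = ip x y - ip x z.
Proof. by rewrite ipDr ipNr. Qed.

Lemma ipxx_eq0 x : ip x x = 0 -> x = 0.
Proof. by case: ip_inner => _ _ _; apply. Qed.

Lemma ip_eqr y z : (forall x, ip x y = ip x z) -> y = z.
Proof.
by move=> eq_yz; apply/eqP; rewrite -subr_eq0; apply/eqP/ipxx_eq0; rewrite ipBr eq_yz subrr.
Qed.

Definition norm2 x : R := Re (ip x x).

Lemma ipxx x : ip x x = (norm2 x)%:C.
Proof. by apply: ge0_complex; case: ip_inner. Qed.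

Lemma norm2_ge0 x : 0 <= norm2 x.
Proof. by rewrite -lecR rmorph0 -ipxx; case: ip_inner. Qed.

Lemma norm2_eq0 x : norm2 x = 0 -> x = 0.
Proof. by move=> x0; apply: ipxx_eq0; rewrite ipxx x0 rmorph0. Qed.

Lemma norm20 : norm2 0 = 0. Proof. by rewrite /norm2 ip0l. Qed.

Lemma norm2D x y : norm2 (x + y) = norm2 x + norm2 y + 2 * Re (ip x y).
Proof. rewrite /norm2 ipDl !ipDr (ipC x y) !ReD ReJ; ring. Qed.

Lemma norm2N x : norm2 (- x) = norm2 x.
Proof. by rewrite /norm2 ipNl ipNr opprK. Qed.

Lemma norm2B x y : norm2 (x - y) = norm2 x + norm2 y - 2 * Re (ip x y).
Proof. rewrite norm2D norm2N ipNr ReN; ring. Qed.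

Lemma norm2Z a x : norm2 (a *: x) = normc2 a * norm2 x.
Proof. by rewrite /norm2 ipZl ipZr mulrA [a * _]mulrC mulJc ipxx -rmorphM. Qed.

Lemma parallelogram x y : norm2 (x - y) + norm2 (x + y) = 2 * norm2 x + 2 * norm2 y.
Proof. rewrite norm2B norm2D; ring. Qed.

Lemma norm2D_le x y : norm2 (x + y) <= 2 * norm2 x + 2 * norm2 y.
Proof. by have := parallelogram x y; have := norm2_ge0 (x - y); lra. Qed.

Lemma norm2B_le x y : norm2 (x - y) <= 2 * norm2 x + 2 * norm2 y.
Proof. by have := norm2D_le x (- y); rewrite norm2N. Qed.

Lemma norm2_sub_scale x y a (s : R) :
  norm2 (x - (s%:C * a) *: y) = norm2 x + s ^+ 2 * normc2 a * norm2 y - 2 * s * Re (a^* * ip x y).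
Proof.
rewrite norm2B norm2Z normc2M normc2_real ipZr rmorphM /= conjC_real.
by rewrite -[_ * _ * ip x y]mulrA ReCM; ring.
Qed.

Lemma Re_ip_le x y (s : R) : 0 < s -> 2 * Re (ip x y) <= s * norm2 x + s^-1 * norm2 y.
Proof.
move=> s0; have := norm2_ge0 (s%:C *: x - y).
rewrite norm2B norm2Z normc2_real ipZl ReCM => nonneg.
rewrite -(ler_pM2l s0) mulrDr !mulrA mulfV ?gt_eqF // mul1r; nra.
Qed.

Lemma CauchySchwarz x y : normc2 (ip x y) <= norm2 x * norm2 y.
Proof.
have [y0|y_neq0] := eqVneq (norm2 y) 0.
  by rewrite (norm2_eq0 y0) ip0r norm20 mulr0 /normc2 /= expr0n addr0.
have y_gt0 : 0 < norm2 y by rewrite lt_def y_neq0 norm2_ge0.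
have := norm2_ge0 (x - ((norm2 y)^-1%:C * ip x y) *: y).
rewrite norm2_sub_scale mulJc /=.
have -> : norm2 x + (norm2 y)^-1 ^+ 2 * normc2 (ip x y) * norm2 y
    - 2 * (norm2 y)^-1 * normc2 (ip x y)
  = (norm2 x * norm2 y - normc2 (ip x y)) / norm2 y by field; rewrite gt_eqF.
by rewrite pmulr_lge0 ?invr_gt0 // subr_ge0.
Qed.

Lemma hnormE x : hnorm ip x = (Num.sqrt (norm2 x))%:C.
Proof. by rewrite /hnorm ipxx sqrtC_real // norm2_ge0. Qed.

Lemma hnorm_le x y : (hnorm ip x <= hnorm ip y) <-> norm2 x <= norm2 y.
Proof. by rewrite !hnormE lecR ler_sqrt // norm2_ge0. Qed.

End InnerProduct.

Section Completeness.
Variables (R : realType) (V : lmodType R[i]) (ip : V -> V -> R[i]).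
Hypothesis ip_inner : inner_product ip.
Local Notation norm2 := (norm2 ip).
Implicit Types (x y : V) (u : nat -> V) (M : V -> Prop).

Definition cauchy_seq u := forall e : R, 0 < e -> exists N, forall m n,
  (N <= m)%N -> (N <= n)%N -> norm2 (u m - u n) < e.

Definition converges_to u l := forall e : R, 0 < e -> exists N, forall n,
  (N <= n)%N -> norm2 (u n - l) < e.

Lemma completeP : complete ip <-> forall u, cauchy_seq u -> exists l, converges_to u l.
Proof.
have sqrt_gt0 (e : R) : 0 < e -> 0 < (Num.sqrt e)%:C by rewrite ltcR sqrtr_gt0.
split=> [compl u u_cauchy | compl u u_cauchy].
  have [l ul] : exists l, forall e : R[i], 0 < e -> exists N, forall n,
      (N <= n)%N -> hnorm ip (u n - l) < e.
    apply: compl => e /gt0_complex [-> e0].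
    have [N uN] := u_cauchy _ (exprn_gt0 2 e0).
    by exists N => m n Nm Nn; rewrite hnormE // ltcR sqrtr_lt // uN.
  exists l => e e0; have [N uN] := ul _ (sqrt_gt0 e e0).
  by exists N => n Nn; move: (uN n Nn); rewrite hnormE // ltcR ltr_sqrt.
have [l ul] : exists l, converges_to u l.
  apply: compl => e e0; have [N uN] := u_cauchy _ (sqrt_gt0 e e0).
  by exists N => m n Nm Nn; move: (uN m n Nm Nn); rewrite hnormE // ltcR ltr_sqrt.
exists l => e /gt0_complex [-> e0]; have [N uN] := ul _ (exprn_gt0 2 e0).
by exists N => n Nn; rewrite hnormE // ltcR sqrtr_lt // uN.
Qed.

Definition subspace M := M 0 /\ forall a x y, M x -> M y -> M (a *: x + y).

Definition closed_set M := forall u l, (forall n, M (u n)) -> converges_to u l -> M l.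

Section Subspace.
Variable M : V -> Prop.
Hypothesis M_sub : subspace M.

Lemma subspace0 : M 0. Proof. by case: M_sub. Qed.

Lemma subspaceD x y : M x -> M y -> M (x + y).
Proof. by case: M_sub => _ M_lin Mx My; have := M_lin 1 x y Mx My; rewrite scale1r. Qed.

Lemma subspaceZ a x : M x -> M (a *: x).
Proof. by case: M_sub => M0 M_lin Mx; have := M_lin a x 0 Mx M0; rewrite addr0. Qed.

Lemma subspaceB x y : M x -> M y -> M (x - y).
Proof. by move=> Mx My; rewrite -scaleN1r; apply: subspaceD => //; apply: subspaceZ. Qed.

Lemma ip_eq_on_subspace x y :
  M x -> M y -> (forall z, M z -> ip x z = ip y z) -> x = y.
Proof.
move=> Mx My eq_xy; apply/eqP; rewrite -subr_eq0; apply/eqP/(ipxx_eq0 ip_inner).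
by rewrite (ipBl ip_inner) eq_xy ?subrr //; exact: subspaceB.
Qed.

Lemma orth_of_min_dist x p : M p ->
    (forall m, M m -> norm2 (x - p) <= norm2 (x - m)) ->
  forall y, M y -> ip (x - p) y = 0.
Proof.
(* Compare with the competitor [p + s w y], [s := 1 / (norm2 y + 1)]: minimality
   gives [s |w|^2 (1 + s) <= 0]. *)
move=> Mp p_min y My; pose w := ip (x - p) y; pose s := (norm2 y + 1)^-1.
have y0 := norm2_ge0 ip_inner y; have w0 := normc2_ge0 w.
have s0 : 0 < s by rewrite /s invr_gt0; lra.
have sy : s * norm2 y = 1 - s.
  by rewrite /s -[X in X - _](mulfV (lt0r_neq0 (ltr_wpDl y0 ltr01))); lra.
have := p_min _ (subspaceD Mp (subspaceZ (s%:C * w) My)).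
rewrite opprD addrA norm2_sub_scale // mulJc /= -/w => dist_le.
have : s * (normc2 w * (1 + s)) <= 0 by nra.
rewrite pmulr_rle0 // pmulr_lle0 => [w_le0|]; last by lra.
by apply: normc2_eq0; apply/eqP; rewrite eq_le w_le0 w0.
Qed.

Lemma minimizing_seq_cauchy x (d : R) (m : nat -> V) :
    (forall y, M y -> d <= norm2 (x - y)) -> (forall n, M (m n)) ->
    (forall n, norm2 (x - m n) < d + n.+1%:R^-1) ->
  cauchy_seq m.
Proof.
move=> d_le Mm m_close e e0.
have [N N_small] := exists_inv_lt (divr_gt0 e0 (ltr0Sn _ 3)).
exists N => p q Np Nq.
have mid : M (2^-1%:C *: (m p + m q)) by apply/subspaceZ/subspaceD.
have := d_le _ mid.
have := parallelogram ip_inner (x - m q) (x - m p).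
rewrite (_ : _ - (_ - m p) = m p - m q); last by rewrite opprB addrC addrA subrK.
rewrite (_ : _ + (_ - m p) = 2%:C *: (x - 2^-1%:C *: (m p + m q))); last first.
  rewrite scalerBr scalerA -rmorphM mulfV ?pnatr_eq0 // rmorph1 scale1r.
  by rewrite rmorph_nat scaler_nat mulr2n addrACA -opprD [m q + _]addrC.
rewrite norm2Z // normc2_real (_ : (2 : R) ^+ 2 = 4); last by rewrite expr2 -natrM.
have := m_close p; have := m_close q; have := N_small p Np; have := N_small q Nq.
move: (p.+1%:R^-1) (q.+1%:R^-1) => P Q; lra.
Qed.

Lemma norm2_sub_limit_le x (d : R) u l : converges_to u l ->
  (forall n, norm2 (x - u n) < d + n.+1%:R^-1) -> norm2 (x - l) <= d.
Proof.
move=> ul u_close; have d0 : 0 <= d.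
  apply: (@ler_of_small_eps _ _ _ 1) => // e e0 _; have [N N_small] := exists_inv_lt e0.
  have := norm2_ge0 ip_inner (x - u N); have := u_close N; have := N_small N (leqnn N).
  by move: N.+1%:R^-1 => P; lra.
apply: (@ler_of_small_eps _ _ _ (d + 4)); first lra.
move=> e e0 e1; have [N1 N1_small] := exists_inv_lt e0.
have [N2 N2_close] := ul _ (exprn_gt0 2 e0); pose n := maxn N1 N2.
have ul_n := N2_close n (leq_maxr _ _).
have young := Re_ip_le ip_inner (x - u n) (u n - l) e0.
have ul_e : e^-1 * norm2 (u n - l) <= e.
  rewrite -[leRHS](mulKf (lt0r_neq0 e0)) -expr2.
  by apply: ler_wpM2l; [rewrite invr_ge0 ltW | exact: ltW].
have ux_n : norm2 (x - u n) < d + e.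
  by have := u_close n; have := N1_small n (leq_maxl _ _); move: n.+1%:R^-1 => P; lra.
have ux_e : e * norm2 (x - u n) <= e * (d + e) by rewrite ler_pM2l // ltW.
have -> : x - l = (x - u n) + (u n - l) by rewrite addrA subrK.
rewrite norm2D //.
move: young ul_e; move: e^-1 => ie; nra.
Qed.

Lemma exists_min_dist : complete ip -> closed_set M ->
  forall x, exists2 p, M p & forall m, M m -> norm2 (x - p) <= norm2 (x - m).
Proof.
move=> compl M_closed x; pose E (r : R) := exists2 m, M m & r = norm2 (x - m).
have E_ne : exists r, E r by exists (norm2 (x - 0)), 0 => //; exact: subspace0.
have E_lb : exists r, forall s, E s -> r <= s.
  by exists 0 => _ [m _ ->]; exact: norm2_ge0.
pose d := inf E; have d_le y : M y -> d <= norm2 (x - y).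
  by move=> My; apply: (ge_inf E_lb); exists y.
have [m mP] : exists m : nat -> V, forall n, M (m n) /\ norm2 (x - m n) < d + n.+1%:R^-1.
  apply: (ClassicalEpsilon.choice (fun n y => M y /\ norm2 (x - y) < d + n.+1%:R^-1)) => n.
  have : d < d + n.+1%:R^-1 by rewrite ltrDl invr_gt0 ltr0Sn.
  by move=> /(inf_lt E_ne) [_ [y My ->] yd]; exists y.
have Mm n : M (m n) by case: (mP n).
have [l ml] := (completeP.1 compl) m (minimizing_seq_cauchy d_le Mm (fun n => (mP n).2)).
exists l => [|y My]; first exact: M_closed ml.
apply: le_trans (d_le _ My); exact: norm2_sub_limit_le ml (fun n => (mP n).2).
Qed.

Lemma orthogonal_decomposition : complete ip -> closed_set M ->
  forall x, exists2 p, M p & forall y, M y -> ip (x - p) y = 0.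
Proof.
move=> compl M_closed x; have [p Mp p_min] := exists_min_dist compl M_closed x.
by exists p => //; exact: orth_of_min_dist.
Qed.

End Subspace.

Section Functional.
Variable f : V -> R[i].
Hypothesis f_lin : forall a x y, f (a *: x + y) = a * f x + f y.

Lemma lfun0 : f 0 = 0.
Proof.
by apply: (addrI (f 0)); have := f_lin 1 0 0; rewrite scale1r addr0 mul1r addr0 => <-.
Qed.

Lemma lfunZ a x : f (a *: x) = a * f x.
Proof. by have := f_lin a x 0; rewrite addr0 lfun0 addr0. Qed.

Lemma lfunB x y : f (x - y) = f x - f y.
Proof. by rewrite addrC -scaleN1r f_lin mulN1r addrC. Qed.

Hypothesis f_bounded : exists K : R, forall x, normc2 (f x) <= K * norm2 x.

Lemma lfun_kernel_closed : closed_set (fun x => f x = 0).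
Proof.
have [K fK] := f_bounded; move=> u l fu ul.
have : normc2 (f l) <= 0.
  apply: (@ler_of_small_eps _ _ _ `|K|) => // e e0 _.
  have [N uN] := ul e e0; have := fK (l - u N).
  rewrite lfunB fu subr0 -opprB norm2N // add0r => fl_le.
  have uN_ge0 := norm2_ge0 ip_inner (u N - l).
  have : K * norm2 (u N - l) <= `|K| * e.
    apply: le_trans (ler_wpM2r uN_ge0 (ler_norm K)) _.
    by apply: ler_wpM2l; [exact: normr_ge0 | exact: ltW (uN N (leqnn N))].
  by rewrite mulrC; lra.
by move=> fl_le0; apply: normc2_eq0; apply/eqP; rewrite eq_le fl_le0 normc2_ge0.
Qed.

Lemma riesz_representation : complete ip -> exists z, forall x, f x = ip x z.
Proof.
move=> compl; have [[x0 fx0_neq0]|f_eq0] := classic (exists x0, f x0 != 0); last first.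
  exists 0 => x; rewrite ip0r //; have [//|fx_neq0] := eqVneq (f x) 0.
  by case: f_eq0; exists x.
have ker_sub : subspace (fun x => f x = 0).
  by split=> [|a y z fy fz]; rewrite ?lfun0 // f_lin fy fz mulr0 addr0.
have [p fp p_orth] := orthogonal_decomposition ker_sub compl lfun_kernel_closed x0.
pose w := x0 - p; have fw : f w = f x0 by rewrite lfunB fp subr0.
have ww_neq0 : ip w w != 0.
  by apply: contra fx0_neq0 => /eqP/(ipxx_eq0 ip_inner) w0; rewrite -fw w0 lfun0.
exists ((f w / ip w w)^* *: w) => x.
have := p_orth (x - (f x / f w) *: w); rewrite -/w lfunB lfunZ divfK ?fw // subrr.
move=> /(_ erefl) /eqP; rewrite (ipBr ip_inner) (ipZr ip_inner) subr_eq0 => /eqP wx.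
rewrite (ipZr ip_inner) conjCK (ipC ip_inner w x) wx rmorphM /= conjCK -(ipC ip_inner).
by field; apply/andP.
Qed.

End Functional.
End Completeness.

Section Linear.
Variables (R : realType) (V : lmodType R[i]) (A : V -> V).
Hypothesis A_lin : is_lin A.

Lemma lin0 : A 0 = 0.
Proof.
have := A_lin 1 0 0; rewrite !scale1r addr0 => A00.
by apply: (addrI (A 0)); rewrite addr0 -A00.
Qed.

Lemma linZ a x : A (a *: x) = a *: A x.
Proof. by have := A_lin a x 0; rewrite addr0 lin0 addr0. Qed.

Lemma linD x y : A (x + y) = A x + A y.
Proof. by have := A_lin 1 x y; rewrite !scale1r. Qed.

Lemma linB x y : A (x - y) = A x - A y.
Proof. by rewrite linD -scaleN1r linZ scaleN1r. Qed.

Lemma lin_comp (B : V -> V) : is_lin B -> is_lin (A \o B).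
Proof. by move=> B_lin a x y /=; rewrite B_lin A_lin. Qed.

Lemma range_subspace : subspace (oprange A).
Proof.
split; first by exists 0; rewrite lin0.
by move=> a _ _ [u ->] [v ->]; exists (a *: u + v); rewrite A_lin.
Qed.

End Linear.

Section BoundedOperators.
Variables (R : realType) (V : lmodType R[i]) (ip : V -> V -> R[i]).
Hypothesis ip_inner : inner_product ip.
Local Notation norm2 := (norm2 ip).
Implicit Types (A B T : V -> V) (x y : V).

Lemma bounded_opP A : bounded_op ip A <->
  is_lin A /\ exists2 K, 0 <= K & forall x, norm2 (A x) <= K * norm2 x.
Proof.
split=> [[A_lin [M AM]]|[A_lin [K K0 AK]]]; split=> //.
  exists (normc2 M) => [|x]; first exact: normc2_ge0.
  move: (AM x); rewrite !hnormE // lecE => /andP[_]; rewrite mulrC ReCM /= => le_sqrt.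
  rewrite -(sqr_sqrtr (norm2_ge0 ip_inner (A x))) -(sqr_sqrtr (norm2_ge0 ip_inner x)) /normc2.
  have := sqrtr_ge0 (norm2 (A x)); have := sqrtr_ge0 (norm2 x).
  move: (Num.sqrt _) (Num.sqrt _) le_sqrt => a b; nra.
exists (Num.sqrt K)%:C => x; rewrite !hnormE // -rmorphM lecR -sqrtrM //.
by apply: ler_wsqrtr; exact: AK.
Qed.

Lemma bounded_comp A B : bounded_op ip A -> bounded_op ip B -> bounded_op ip (A \o B).
Proof.
move=> /bounded_opP[A_lin [KA KA0 AK]] /bounded_opP[B_lin [KB KB0 BK]].
apply/bounded_opP; split; first exact: lin_comp.
exists (KA * KB) => [|x /=]; first exact: mulr_ge0.
by apply: le_trans (AK _) _; rewrite -mulrA ler_wpM2l.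
Qed.

Definition bounded_below T := exists2 c : R, 0 < c & forall x, norm2 x <= c * norm2 (T x).

Lemma left_invertible_bounded_below T : left_invertible ip T -> bounded_below T.
Proof.
case=> L [/bounded_opP[_ [K K0 LK]] LT]; exists (K + 1) => [|x]; first lra.
by have := LK (T x); rewrite LT; have := norm2_ge0 ip_inner (T x); nra.
Qed.

Hypothesis ip_complete : complete ip.

Section Adjoint.
Variable T : V -> V.
Hypothesis T_bounded : bounded_op ip T.
Local Notation T_lin := T_bounded.1.

Lemma adj_exists : exists B, forall x y, ip (T x) y = ip x (B y).
Proof.
have /bounded_opP[_ [K K0 TK]] := T_bounded.
have repr y : exists z, forall x, ip (T x) y = ip x z.
  apply: (riesz_representation ip_inner (f := fun x => ip (T x) y)) ip_complete => [a x x'|].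
    by rewrite T_lin (ipDl ip_inner) (ipZl ip_inner).
  exists (K * norm2 y) => x; apply: le_trans (CauchySchwarz ip_inner _ _) _.
  by rewrite mulrAC ler_wpM2r ?norm2_ge0.
by have [B BP] := ClassicalEpsilon.choice _ repr; exists B => x y; exact: BP.
Qed.

Lemma adjP x y : ip (T x) y = ip x (adj ip T y).
Proof.
move: x y; apply: (epsilon_spec _ (fun B : V -> V => forall x y, ip (T x) y = ip x (B y))).
exact: adj_exists.
Qed.

Lemma adjPl x y : ip (adj ip T y) x = ip y (T x).
Proof. by rewrite (ipC ip_inner) -adjP -(ipC ip_inner). Qed.

Lemma adj_lin : is_lin (adj ip T).
Proof.
move=> a x y; apply: (ip_eqr ip_inner) => z.
by rewrite -adjP (ipDr ip_inner) (ipZr ip_inner) (ipDr ip_inner) (ipZr ip_inner) !adjP.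
Qed.

Lemma adj_bounded : bounded_op ip (adj ip T).
Proof.
have /bounded_opP[_ [K K0 TK]] := T_bounded.
apply/bounded_opP; split; first exact: adj_lin.
exists K => // y; set Sy := adj ip T y.
have := CauchySchwarz ip_inner (T Sy) y; rewrite adjP ipxx // normc2_real => CS.
have TSy := ler_wpM2r (norm2_ge0 ip_inner y) (TK Sy).
have := norm2_ge0 ip_inner Sy; rewrite le_eqVlt => /predU1P[<-|Sy_gt0].
  by rewrite mulr_ge0 ?norm2_ge0.
by rewrite -(ler_pM2l Sy_gt0); nra.
Qed.

End Adjoint.
End BoundedOperators.

Section GramInverse.
Variables (R : realType) (V : lmodType R[i]) (ip : V -> V -> R[i]).
Hypothesis ip_inner : inner_product ip.
Hypothesis ip_complete : complete ip.
Variable T : V -> V.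
Hypothesis T_bounded : bounded_op ip T.
Hypothesis T_below : bounded_below ip T.
Local Notation norm2 := (norm2 ip).
Local Notation S := (adj ip T).
Local Notation T_lin := T_bounded.1.
Local Notation S_lin := (adj_lin ip_inner ip_complete T_bounded).
Local Notation adjTP := (adjP ip_inner ip_complete T_bounded).
Let ipT x y := ip (T x) (T y).

Lemma range_ip_inner : inner_product ipT.
Proof.
have [c c0 cT] := T_below; split=> [a x y z|x y|x|x]; rewrite /ipT.
- by rewrite T_lin (ipDl ip_inner) (ipZl ip_inner).
- exact: (ipC ip_inner).
- by rewrite ipxx // lecR norm2_ge0.
move=> /(ipxx_eq0 ip_inner) Tx0; apply: (norm2_eq0 ip_inner).
by apply/eqP; rewrite eq_le norm2_ge0 // andbT; have := cT x; rewrite Tx0 norm20 // mulr0.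
Qed.

Lemma range_ip_complete : complete ipT.
Proof.
have [c c0 cT] := T_below; have /(bounded_opP ip_inner)[_ [K K0 TK]] := T_bounded.
apply/(completeP range_ip_inner) => u u_cauchy.
have u_cauchy_ip : cauchy_seq ip u.
  move=> e e0; have [N uN] := u_cauchy (e / c) (divr_gt0 e0 c0).
  exists N => m n Nm Nn; apply: le_lt_trans (cT _) _.
  by rewrite mulrC -ltr_pdivlMr //; exact: uN.
have [l ul] := (completeP ip_inner).1 ip_complete u u_cauchy_ip.
exists l => e e0; have K1 : 0 < K + 1 by lra.
have [N uN] := ul (e / (K + 1)) (divr_gt0 e0 K1).
exists N => n Nn; change (norm2 (T (u n - l)) < e); apply: le_lt_trans (TK _) _.
have := uN n Nn; rewrite ltr_pdivlMr // => ul_n.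
by have := norm2_ge0 ip_inner (u n - l); nra.
Qed.

Lemma gram_surj y : exists z, S (T z) = y.
Proof.
have [c c0 cT] := T_below.
have f_lin a x x' : ip (a *: x + x') y = a * ip x y + ip x' y.
  by rewrite (ipDl ip_inner) (ipZl ip_inner).
have f_bounded : exists K, forall x, normc2 (ip x y) <= K * norm2 (T x).
  exists (c * norm2 y) => x; apply: le_trans (CauchySchwarz ip_inner _ _) _.
  by rewrite mulrAC ler_wpM2r ?norm2_ge0.
have [z zP] := riesz_representation range_ip_inner f_lin f_bounded range_ip_complete.
by exists z; apply: (ip_eqr ip_inner) => x; rewrite zP /ipT adjTP.
Qed.

Lemma gram_inj x x' : S (T x) = S (T x') -> x = x'.
Proof.
have [c c0 cT] := T_below; move=> eq_STx; apply/eqP; rewrite -subr_eq0; apply/eqP.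
have STx0 : S (T (x - x')) = 0 by rewrite (linB T_lin) (linB S_lin) eq_STx subrr.
apply: (norm2_eq0 ip_inner); apply/eqP; rewrite eq_le norm2_ge0 // andbT.
by apply: le_trans (cT _) _; rewrite /norm2 adjTP STx0 ip0r //= mulr0.
Qed.

Lemma gram_inverse_exists : exists Q, [/\ bounded_op ip Q,
  forall x, Q (S (T x)) = x & forall x, S (T (Q x)) = x].
Proof.
have [c c0 cT] := T_below; have [Q QP] := ClassicalEpsilon.choice _ gram_surj.
have QK x : Q (S (T x)) = x by apply: gram_inj; rewrite QP.
exists Q; split=> //; apply/(bounded_opP ip_inner); split.
  by move=> a x y; apply: gram_inj; rewrite QP T_lin S_lin !QP.
exists (c ^+ 2) => [|y]; first by rewrite exprn_ge0 // ltW.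
have TQy : norm2 (T (Q y)) = Re (ip (Q y) y) by rewrite /norm2 adjTP QP.
have ic0 : 0 < c^-1 by rewrite invr_gt0.
have := Re_ip_le ip_inner (Q y) y ic0; rewrite invrK -TQy => young.
have := ler_wpM2l (ltW c0) young; rewrite mulrDr !mulrA mulfV ?gt_eqF // mul1r.
by have := cT (Q y); nra.
Qed.

Lemma opinv_gramP : [/\ bounded_op ip (opinv ip (S \o T)),
  forall x, opinv ip (S \o T) (S (T x)) = x & forall x, S (T (opinv ip (S \o T) x)) = x].
Proof.
have [Q [Q_bounded QK QV]] := gram_inverse_exists.
have := epsilon_spec (inhabits id) (fun B : V -> V => bounded_op ip B /\
  (forall x, B ((S \o T) x) = x) /\ (forall x, (S \o T) (B x) = x)).
by case=> [|inv_bounded [invK invV]]; first by exists Q.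
Qed.

End GramInverse.

Section Restriction.
Variables (R : realType) (V : lmodType R[i]) (ip : V -> V -> R[i]).
Hypothesis ip_inner : inner_product ip.
Local Notation norm2 := (norm2 ip).
Variable M : V -> Prop.
Hypothesis M_sub : subspace M.

Lemma orth_projE P : is_orth_proj ip M P -> forall x, orth_proj ip M x = P x.
Proof.
move=> P_proj; have [_ P'M _ P'orth] : is_orth_proj ip M (orth_proj ip M).
  by apply: epsilon_spec; exists P.
case: P_proj => _ PM _ Porth x; apply/eqP; rewrite -subr_eq0; apply/eqP/(ipxx_eq0 ip_inner).
have PP'M : M (orth_proj ip M x - P x) by apply: subspaceB.
have diffE : orth_proj ip M x - P x = (x - P x) - (x - orth_proj ip M x).
  by rewrite [RHS]addrC opprB addrA subrK.
by rewrite {1}diffE (ipBl ip_inner) P'orth // Porth // subrr.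
Qed.

Variables (A B : V -> V).
Hypothesis B_stable : forall x, M x -> M (B x).
Hypothesis B_adj : forall x y, M x -> M y -> ip (A x) y = ip x (B y).

Lemma adj_onE x : M x -> adj_on ip M A x = B x.
Proof.
have [adj_onM adj_onP] : (forall x, M x -> M (adj_on ip M A x)) /\
    (forall x y, M x -> M y -> ip (A x) y = ip x (adj_on ip M A y)).
  apply: (epsilon_spec _ (fun B' : V -> V => (forall x, M x -> M (B' x)) /\
    (forall x y, M x -> M y -> ip (A x) y = ip x (B' y)))).
  by exists B.
move=> Mx; apply: (ip_eq_on_subspace ip_inner M_sub (adj_onM _ Mx) (B_stable Mx)) => z Mz.
by rewrite (ipC ip_inner) -adj_onP // B_adj // -(ipC ip_inner).
Qed.

Lemma hyponormal_onP : (forall x, M x -> M (A x)) ->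
  hyponormal_on ip M A <-> forall x, M x -> norm2 (B x) <= norm2 (A x).
Proof.
move=> A_stable.
have commE x : M x -> ip (adj_on ip M A (A x) - A (adj_on ip M A x)) x
    = (norm2 (A x) - norm2 (B x))%:C.
  move=> Mx; have MAx := A_stable x Mx; have MBx := B_stable Mx.
  rewrite !adj_onE // (ipBl ip_inner) B_adj // (ipC ip_inner) -B_adj //.
  by rewrite -(ipC ip_inner) !ipxx // -rmorphB.
split=> [[_ hypo] x Mx | le_norm2]; last split=> // x Mx.
  by have := hypo x Mx; rewrite commE // lecR subr_ge0.
by rewrite commE // lecR subr_ge0 le_norm2.
Qed.

End Restriction.

Section CauchyDual.
Variables (R : realType) (V : lmodType R[i]) (ip : V -> V -> R[i]).
Hypothesis ip_inner : inner_product ip.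
Hypothesis ip_complete : complete ip.
Variable T : V -> V.
Hypothesis T_bounded : bounded_op ip T.
Hypothesis T_left_inv : left_invertible ip T.
Local Notation norm2 := (norm2 ip).
Local Notation S := (adj ip T).
Local Notation Q := (opinv ip (S \o T)).
Local Notation T' := (cdual ip T).
Local Notation T_lin := T_bounded.1.
Local Notation S_lin := (adj_lin ip_inner ip_complete T_bounded).
Local Notation adjTP := (adjP ip_inner ip_complete T_bounded).
Local Notation adjTPl := (adjPl ip_inner ip_complete T_bounded).

Let gramP := opinv_gramP ip_inner ip_complete T_bounded
  (left_invertible_bounded_below ip_inner T_left_inv).

Lemma gramK x : Q (S (T x)) = x. Proof. by case: gramP. Qed.
Lemma gramV x : S (T (Q x)) = x. Proof. by case: gramP. Qed.
Lemma gram_inv_bounded : bounded_op ip Q. Proof. by case: gramP. Qed.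
Local Notation Q_lin := gram_inv_bounded.1.

Lemma gram_inv_selfadj x y : ip (Q x) y = ip x (Q y).
Proof. by rewrite -{1}(gramV y) -adjTP -adjTPl gramV. Qed.

Lemma ip_gram_inv w : ip (Q w) w = (norm2 (T (Q w)))%:C.
Proof. by rewrite -{2}(gramV w) -adjTP ipxx. Qed.

Lemma orth_proj_range x : orth_proj ip (oprange T) x = T (Q (S x)).
Proof.
apply: (orth_projE ip_inner (range_subspace T_lin) (P := fun y => T (Q (S y)))).
split=> [||_ [y ->]|y _ [v ->]].
- exact: (lin_comp T_lin (lin_comp Q_lin S_lin)).
- by move=> y; exists (Q (S y)).
- by rewrite gramK.
by rewrite -adjTPl (linB S_lin) gramV subrr ip0l.
Qed.

Lemma orth_proj_range_selfadj x y : ip x (T (Q (S y))) = ip (T (Q (S x))) y.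
Proof. by rewrite -adjTPl -gram_inv_selfadj adjTP. Qed.

Lemma cdual_range y : oprange T' y <-> oprange T y.
Proof. by split=> [[x ->]|[x ->]]; [exists (Q x) | exists (S (T x)); rewrite /cdual /= gramK]. Qed.

Lemma cdual_cond_norm :
  (forall x, hnorm ip (T' (S x)) <= hnorm ip (T' (T x))) <->
  forall y, norm2 (T' (S y)) <= norm2 (T' (T y)).
Proof. by split=> le_norm y; apply/(hnorm_le ip_inner); exact: le_norm. Qed.

Lemma cdual_cond_op_le :
  op_le ip (T \o Q \o S) (S \o Q \o T) <-> forall y, norm2 (T' (S y)) <= norm2 (T' (T y)).
Proof.
have opE y : (ip ((T \o Q \o S) y) y <= ip ((S \o Q \o T) y) y)
    = (norm2 (T' (S y)) <= norm2 (T' (T y))).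
  by rewrite /= adjTP adjTPl !ip_gram_inv lecR.
by split=> le_op y; [rewrite -opE | rewrite opE].
Qed.

Lemma cdual_cond_proj_le :
  op_le ip (orth_proj ip (oprange T)) (S \o Q \o T) <-> op_le ip (T \o Q \o S) (S \o Q \o T).
Proof. by split=> le_op y; have := le_op y; rewrite /= orth_proj_range. Qed.

Lemma cdual_cond_hyponormal :
  hyponormal_on ip (oprange T') T' <-> forall y, norm2 (T' (S y)) <= norm2 (T' (T y)).
Proof.
pose B x := T (Q (S (Q (S x)))).
have B_stable x : oprange T' x -> oprange T' (B x) by move=> _; exists (S (Q (S x))).
have B_adj x y : oprange T' x -> oprange T' y -> ip (T' x) y = ip x (B y).
  move=> [x' ->] [y' ->]; rewrite /B /cdual /= adjTP gram_inv_selfadj !gramV.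
  by rewrite orth_proj_range_selfadj gramK.
have T'_lin : is_lin T' by exact: (lin_comp T_lin Q_lin).
have T'_stable x : oprange T' x -> oprange T' (T' x) by move=> _; exists x.
apply: iff_trans (hyponormal_onP ip_inner (range_subspace T'_lin) B_stable B_adj T'_stable) _.
split=> le_norm2 z.
  by have := le_norm2 (T z) ((cdual_range _).2 (ex_intro _ z erefl)); rewrite /B gramK.
by move=> /cdual_range [y ->]; rewrite /B gramK; exact: le_norm2.
Qed.

Lemma cdual_lower_bound u w : 2 * Re (ip u w) - norm2 (T u) <= norm2 (T' w).
Proof. by have := norm2_ge0 ip_inner (T u - T' w); rewrite norm2B // adjTP gramV; lra. Qed.

Lemma cdual_adj_contraction y : norm2 (T' (S y)) <= norm2 y.
Proof.
have orth : ip (T' (S y)) (y - T' (S y)) = 0.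
  by rewrite (ipBr ip_inner) {2}/cdual /= orth_proj_range_selfadj gramK subrr.
have := norm2D ip_inner (T' (S y)) (y - T' (S y)); rewrite orth addrC subrK /= mulr0 addr0.
by have := norm2_ge0 ip_inner (y - T' (S y)); lra.
Qed.

End CauchyDual.

Section ApproximateSpectrum.
Variables (R : realType) (V : lmodType R[i]) (ip : V -> V -> R[i]).
Hypothesis ip_inner : inner_product ip.
Local Notation norm2 := (norm2 ip).
Variable T : V -> V.

Lemma ap_specP l : ap_spec ip T l ->
  forall e : R, 0 < e -> exists x, norm2 x = 1 /\ norm2 (T x - l *: x) < e.
Proof.
move=> l_ap e e0; have sqrt_e0 : 0 < (Num.sqrt e)%:C by rewrite ltcR sqrtr_gt0.
have [x [x1 Tx]] := l_ap _ sqrt_e0; exists x; split.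
  move: x1; rewrite hnormE // -(rmorph1 (real_complex R)) => /complexI x1.
  by rewrite -(sqr_sqrtr (norm2_ge0 ip_inner x)) x1 expr1n.
by move: Tx; rewrite hnormE // ltcR ltr_sqrt.
Qed.

Hypothesis T_bounded : bounded_op ip T.
Local Notation T_lin := T_bounded.1.

Lemma iter_sub_pow_bound l k : exists2 C, 0 <= C &
  forall x, norm2 (iter k T x - l ^+ k *: x) <= C * norm2 (T x - l *: x).
Proof.
have /(bounded_opP ip_inner)[_ [K K0 TK]] := T_bounded.
elim: k => [|k [C C0 IHk]].
  by exists 0 => // x; rewrite /= expr0 scale1r subrr norm20 // mul0r.
exists (2 * K * C + 2 * normc2 l ^+ k) => [|x].
  by rewrite addr_ge0 ?mulr_ge0 ?exprn_ge0 ?normc2_ge0.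
have -> : iter k.+1 T x - l ^+ k.+1 *: x
    = T (iter k T x - l ^+ k *: x) + l ^+ k *: (T x - l *: x).
  by rewrite /= (linB T_lin) (linZ T_lin) scalerBr scalerA -exprSr addrA subrK.
apply: le_trans (norm2D_le ip_inner _ _) _; rewrite norm2Z // normc2X.
have := ler_wpM2l (ler0n _ 2) (ler_wpM2l K0 (IHk x)); have := TK (iter k T x - l ^+ k *: x).
have := normc2_ge0 l; have := norm2_ge0 ip_inner (T x - l *: x).
move: (normc2 l ^+ k) (exprn_ge0 k (normc2_ge0 l)) => Lk Lk0; nra.
Qed.

End ApproximateSpectrum.

Section Concave.
Variables (R : realType) (V : lmodType R[i]) (ip : V -> V -> R[i]).
Hypothesis ip_inner : inner_product ip.
Hypothesis ip_complete : complete ip.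
Variable T : V -> V.
Hypothesis T_bounded : bounded_op ip T.
Hypothesis T_concave : concave ip T.
Local Notation norm2 := (norm2 ip).
Local Notation S := (adj ip T).
Local Notation adjTPl := (adjPl ip_inner ip_complete T_bounded).

Lemma concave_norm2 x : norm2 x + norm2 (T (T x)) <= 2 * norm2 (T x).
Proof.
have := T_concave x; rewrite (ipDl ip_inner) (ipBl ip_inner) (ipZl ip_inner) !adjTPl ip0l //.
by rewrite !ipxx // -(rmorph_nat (real_complex R)) -rmorphM -rmorphB -rmorphD lecR; lra.
Qed.

(* Concavity makes the increments of [k |-> norm2 (T^k x)] nonincreasing. *)
Lemma concave_iter_norm2 x k :
  norm2 (iter k T x) <= norm2 x + k%:R * (norm2 (T x) - norm2 x).
Proof.
have incr_le j : norm2 (iter j.+1 T x) - norm2 (iter j T x) <= norm2 (T x) - norm2 x.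
  by elim: j => [|j IHj] //=; have := concave_norm2 (iter j T x); rewrite /= in IHj; lra.
elim: k => [|k IHk]; first by rewrite mul0r addr0.
by have := incr_le k; rewrite -natr1; lra.
Qed.

Lemma concave_expansive x : norm2 x <= norm2 (T x).
Proof.
rewrite leNgt; apply/negP; rewrite -subr_gt0 => d0; set d := _ - _ in d0.
have := archi_boundP (divr_ge0 (norm2_ge0 ip_inner x) (ltW d0)).
set k := Num.Def.archi_bound _; rewrite ltr_pdivrMr // => k_gt.
have := concave_iter_norm2 x k; have := norm2_ge0 ip_inner (iter k T x).
by rewrite /d in k_gt; lra.
Qed.

Lemma concave_left_invertible : left_invertible ip T.
Proof.
have T_below : bounded_below ip T by exists 1 => // x; rewrite mul1r concave_expansive.
have [Q [Q_bounded QK _]] := gram_inverse_exists ip_inner ip_complete T_bounded T_below.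
exists (Q \o S); split=> //; exact: bounded_comp (adj_bounded ip_inner ip_complete T_bounded).
Qed.

Lemma concave_ap_ge1 l : ap_spec ip T l -> 1 <= normc2 l.
Proof.
move=> l_ap; have L0 := normc2_ge0 l.
apply: (@ler_of_small_eps _ _ _ (normc2 l + 2)) => [|e e0 e1]; first lra.
have [x [x1 Tx]] := ap_specP ip_inner l_ap (exprn_gt0 2 e0).
have := concave_expansive x; rewrite -(subrK (l *: x) (T x)) addrC norm2D // norm2Z // x1 mulr1.
have := Re_ip_le ip_inner (l *: x) (T x - l *: x) e0; rewrite norm2Z // x1 mulr1.
have Tx_e : e^-1 * norm2 (T x - l *: x) <= e.
  rewrite -[leRHS](mulKf (lt0r_neq0 e0)) -expr2.
  by apply: ler_wpM2l; [rewrite invr_ge0 ltW | exact: ltW].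
by have := norm2_ge0 ip_inner (T x - l *: x); move: Tx_e Tx; move: e^-1 => ie; nra.
Qed.

Lemma concave_ap_le1 l : ap_spec ip T l -> normc2 l <= 1.
Proof.
move=> l_ap; have /(bounded_opP ip_inner)[_ [K K0 TK]] := T_bounded.
have pow_le k : normc2 l ^+ k <= 4 + k%:R * (2 * K).
  have [C C0 CT] := iter_sub_pow_bound ip_inner T_bounded l k.
  have C1 : 0 < C + 1 by lra.
  have iC1 : 0 < (C + 1)^-1 by rewrite invr_gt0.
  have [x [x1 Tx]] := ap_specP ip_inner l_ap iC1.
  have diff_le1 : norm2 (iter k T x - l ^+ k *: x) <= 1.
    have : norm2 (T x - l *: x) * (C + 1) <= 1 by rewrite -ler_pdivlMr // div1r ltW.
    by have := CT x; have := norm2_ge0 ip_inner (T x - l *: x); nra.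
  have := norm2B_le ip_inner (iter k T x) (iter k T x - l ^+ k *: x).
  rewrite opprB addrC subrK norm2Z // normc2X x1 mulr1.
  have := concave_iter_norm2 x k; have := TK x; rewrite x1 mulr1 => Tx_le.
  have : k%:R * (norm2 (T x) - 1) <= k%:R * K by rewrite ler_wpM2l ?ler0n // lerBlDr ler_wpDr.
  lra.
case: (lerP (normc2 l) 1) => // l_gt1.
have [k] := exists_pow_gt_affine l_gt1 (ler0n _ 4) (mulr_ge0 (ler0n _ 2) K0).
by rewrite ltNge pow_le.
Qed.

Lemma concave_cdual_ineq y : norm2 (cdual ip T (S y)) <= norm2 (cdual ip T (T y)).
Proof.
have T_left_inv := concave_left_invertible.
apply: le_trans (cdual_adj_contraction ip_inner ip_complete T_bounded T_left_inv y) _.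
have := cdual_lower_bound ip_inner ip_complete T_bounded T_left_inv (T y) (T y).
by have := concave_norm2 y; rewrite -/(norm2 (T y)); lra.
Qed.

Lemma concave_weakly_concave : weakly_concave ip T.
Proof.
split=> [|l l_ap|x|x]; first exact: concave_left_invertible.
- have l1 : normc2 l = 1 by apply/eqP; rewrite eq_le concave_ap_le1 ?concave_ap_ge1.
  by apply/eqP; rewrite -sqrp_eq1 // normc2_norm l1 rmorph1.
- by apply/(hnorm_le ip_inner); exact: concave_expansive.
by apply/(hnorm_le ip_inner); exact: concave_cdual_ineq.
Qed.

End Concave.

Theorem proposition2p3 (R : realType) (V : lmodType R[i]) (ip : V -> V -> R[i]) :
  hilbert ip ->
  (forall T : V -> V, bounded_op ip T -> left_invertible ip T ->
    let Ts := adj ip T in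
    let Q := opinv ip (Ts \o T) in
    let T' := cdual ip T in
    let c1 := forall x : V, hnorm ip (T' (Ts x)) <= hnorm ip (T' (T x)) in
    let c2 := op_le ip (T \o Q \o Ts) (Ts \o Q \o T) in
    let c3 := op_le ip (orth_proj ip (oprange T)) (Ts \o Q \o T) in
    let c4 := hyponormal_on ip (oprange T') T' in
    [/\ c1 <-> c2, c2 <-> c3 & c3 <-> c4]) /\
  (forall T : V -> V, bounded_op ip T -> concave ip T -> weakly_concave ip T).
Proof.
case=> ip_inner ip_complete; split=> T T_bounded; last exact: concave_weakly_concave.
move=> T_left_inv Ts Q T' c1 c2 c3 c4.
have c1E := cdual_cond_norm ip_inner T.
have c2E := cdual_cond_op_le ip_inner ip_complete T_bounded T_left_inv.
have c32 := cdual_cond_proj_le ip_inner ip_complete T_bounded T_left_inv.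
have c4E := cdual_cond_hyponormal ip_inner ip_complete T_bounded T_left_inv.
by rewrite /c1 /c2 /c3 /c4; split; tauto.
Qed.
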